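(* Let $X$ be a Hausdorff, locally compact, arc connected space with at least two points, let $a\in X$, let $\mathcal I$ be an ideal on $X$, and let $\alpha$ be an infinite cardinal. Then $$\mathfrak P^\alpha_{\mathcal I}(X,a)=\{[f]: f:[0,1]\to X \text{ is an } \alpha\tfrac{\mathcal I}{}\text{loop with base point } a\},$$ i.e. the set of homotopy classes of $\alpha\frac{\mathcal I}{}$loops at $a$ is already a subgroup of $\pi_1(X,a)$.
   Context: A space is arc connected if any two distinct points $p,q$ are joined by a continuous injective map $h:[0,1]\to X$ with $h(0)=p$, $h(1)=q$. An ideal on a set $X$ is a nonempty family $\mathcal I$ of subsets of $X$ closed under finite unions and under taking subsets. For a nonzero cardinal $\alpha$ and an ideal $\mathcal I$ on $X$, a continuous map $f:Z\to X$ is an $\alpha\frac{\mathcal I}{}$map if there is $A\in\mathcal I$ such that for every $x\in X\setminus A$ one has $|f^{-1}(x)|\le\alpha$ when $\alpha$ is finite, and $|f^{-1}(x)|<\alpha$ when $\alpha$ is infinite. An $\alpha\frac{\mathcal I}{}$loop with base point $a$ is an $\alpha\frac{\mathcal I}{}$map $f:[0,1]\to X$ with $f(0)=f(1)=a$. $[f]$ denotes the homotopy class (rel endpoints) of a loop $f$, and $\mathfrak P^\alpha_{\mathcal I}(X,a)$ denotes the subgroup of $\pi_1(X,a)$ generated by the classes of all $\alpha\frac{\mathcal I}{}$loops with base point $a$. *)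

From Stdlib Require Import Reals Lra List Classical.
Open Scope R_scope.

Definition is_topology {X : Type} (op : (X -> Prop) -> Prop) : Prop :=
  (forall U V : X -> Prop, (forall x, U x <-> V x) -> op U -> op V) /\
  op (fun _ => True) /\
  (forall U V, op U -> op V -> op (fun x => U x /\ V x)) /\
  (forall F : (X -> Prop) -> Prop, (forall U, F U -> op U) ->
     op (fun x => exists U, F U /\ U x)).

Definition hausdorff {X : Type} (op : (X -> Prop) -> Prop) : Prop :=
  forall x y : X, x <> y -> exists U V, op U /\ op V /\ U x /\ V y /\
     (forall z, U z -> V z -> False).

Definition compact_set {X : Type} (op : (X -> Prop) -> Prop) (K : X -> Prop) : Prop :=
  forall F : (X -> Prop) -> Prop, (forall U, F U -> op U) ->
    (forall x, K x -> exists U, F U /\ U x) ->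
    exists l : list (X -> Prop), (forall U, In U l -> F U) /\
      (forall x, K x -> exists U, In U l /\ U x).

Definition locally_compact {X : Type} (op : (X -> Prop) -> Prop) : Prop :=
  forall x : X, exists U K, op U /\ U x /\ compact_set op K /\ (forall y, U y -> K y).

(* Maps [0,1] -> X are represented by functions R -> X; only their values on
   [0,1] matter.  Continuity is continuity of the restriction to [0,1]
   (Euclidean subspace topology), written out pointwise. *)
Definition in01 (t : R) : Prop := 0 <= t <= 1.

Definition cont01 {X : Type} (op : (X -> Prop) -> Prop) (f : R -> X) : Prop :=
  forall (U : X -> Prop) (t : R), op U -> in01 t -> U (f t) ->
    exists eps, eps > 0 /\
      forall s, in01 s -> Rabs (s - t) < eps -> U (f s).

Definition cont01x01 {X : Type} (op : (X -> Prop) -> Prop) (H : R -> R -> X) : Prop :=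
  forall (U : X -> Prop) (s t : R), op U -> in01 s -> in01 t -> U (H s t) ->
    exists eps, eps > 0 /\
      forall s' t', in01 s' -> in01 t' -> Rabs (s' - s) < eps -> Rabs (t' - t) < eps ->
        U (H s' t').

Definition arc_connected {X : Type} (op : (X -> Prop) -> Prop) : Prop :=
  forall p q : X, p <> q -> exists h : R -> X,
    cont01 op h /\
    (forall s t, in01 s -> in01 t -> h s = h t -> s = t) /\
    h 0 = p /\ h 1 = q.

Definition is_ideal {X : Type} (I : (X -> Prop) -> Prop) : Prop :=
  (exists A, I A) /\
  (forall A B, I A -> I B -> I (fun x => A x \/ B x)) /\
  (forall A B, I A -> (forall x, B x -> A x) -> I B).

(* A cardinal alpha is represented by a type [A] with |A| = alpha. *)
Definition finite_type (A : Type) : Prop := exists l : list A, forall a, In a l.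

Definition card_le {T : Type} (S : T -> Prop) (A : Type) : Prop :=
  exists g : {t : T | S t} -> A, forall u v, g u = g v -> u = v.

Definition card_lt {T : Type} (S : T -> Prop) (A : Type) : Prop :=
  card_le S A /\ ~ (exists h : A -> {t : T | S t}, forall u v, h u = h v -> u = v).

Definition card_bound {T : Type} (S : T -> Prop) (A : Type) : Prop :=
  (finite_type A -> card_le S A) /\ (~ finite_type A -> card_lt S A).

Definition fiber01 {X : Type} (f : R -> X) (x : X) : R -> Prop :=
  fun t => in01 t /\ f t = x.

Definition alpha_I_map {X : Type} (op : (X -> Prop) -> Prop) (I : (X -> Prop) -> Prop)
  (A : Type) (f : R -> X) : Prop :=
  cont01 op f /\
  exists B, I B /\ forall x, ~ B x -> card_bound (fiber01 f x) A.

Definition is_loop {X : Type} (op : (X -> Prop) -> Prop) (f : R -> X) (a : X) : Prop :=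
  cont01 op f /\ f 0 = a /\ f 1 = a.

Definition alpha_I_loop {X : Type} (op : (X -> Prop) -> Prop) (I : (X -> Prop) -> Prop)
  (A : Type) (f : R -> X) (a : X) : Prop :=
  alpha_I_map op I A f /\ f 0 = a /\ f 1 = a.

Definition path_homotopic {X : Type} (op : (X -> Prop) -> Prop) (f g : R -> X) : Prop :=
  exists H : R -> R -> X, cont01x01 op H /\
    (forall t, in01 t -> H 0 t = f t) /\
    (forall t, in01 t -> H 1 t = g t) /\
    (forall s, in01 s -> H s 0 = f 0) /\
    (forall s, in01 s -> H s 1 = f 1).

Definition path_concat {X : Type} (f g : R -> X) : R -> X :=
  fun t => if Rle_dec t (1/2) then f (2 * t) else g (2 * t - 1).

Definition path_rev {X : Type} (f : R -> X) : R -> X := fun t => f (1 - t).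

(* Loops whose class lies in the subgroup of pi_1(X,a) generated by the classes
   of alpha I-loops at a: the least set of loops containing the alpha I-loops
   and the constant loop, closed under concatenation, reversal and homotopy
   rel endpoints.  P^alpha_I(X,a) = { [g] | gen_loop g }. *)
Inductive gen_loop {X : Type} (op : (X -> Prop) -> Prop) (I : (X -> Prop) -> Prop)
  (A : Type) (a : X) : (R -> X) -> Prop :=
| gen_base : forall f, alpha_I_loop op I A f a -> gen_loop op I A a f
| gen_unit : gen_loop op I A a (fun _ => a)
| gen_mul : forall f g, gen_loop op I A a f -> gen_loop op I A a g ->
    gen_loop op I A a (path_concat f g)
| gen_inv : forall f, gen_loop op I A a f -> gen_loop op I A a (path_rev f)
| gen_homot : forall f g, gen_loop op I A a f -> is_loop op g a ->
    path_homotopic op f g -> gen_loop op I A a g.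

From Stdlib Require Import Reals Lra Lia List Classical ClassicalEpsilon ProofIrrelevance.
From mathcomp Require classical_sets.

(* The α-I-loops are closed under the group operations of [π₁(X, a)], up to homotopy.  The fibre
   of a concatenation over [x] injects into the disjoint union of the fibres of the two factors,
   and for infinite α two sets of size [< α] have a union of size [< α], because [κ + κ = κ]
   for infinite [κ] (Zorn).  Reversal preserves fibres.  The trivial class is represented by
   running along an arc from [a] to some [b ≠ a] and back, whose fibres have at most two
   points. *)

(* [card_le S A] and [card_lt S A] of the definitions are, up to conversion,
   [card_leT {t | S t} A] and [card_ltT {t | S t} A]. *)

Definition card_leT (X Y : Type) : Prop := exists g : X -> Y, forall u v, g u = g v -> u = v.

Definition card_ltT (X Y : Type) : Prop := card_leT X Y /\ ~ card_leT Y X.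

Lemma card_leT_refl X : card_leT X X.
Proof. exists (fun x => x); auto. Qed.

Lemma card_leT_trans X Y Z : card_leT X Y -> card_leT Y Z -> card_leT X Z.
Proof. intros [g Hg] [h Hh]; exists (fun x => h (g x)); auto. Qed.

Lemma card_leT_sum X1 Y1 X2 Y2 :
  card_leT X1 Y1 -> card_leT X2 Y2 -> card_leT (X1 + X2) (Y1 + Y2).
Proof.
  intros [g Hg] [h Hh].
  exists (fun u => match u with inl x => inl (g x) | inr x => inr (h x) end).
  intros [u|u] [v|v] E; inversion E; f_equal; auto.
Qed.

Lemma card_leT_of_rel {X Y : Type} (R : X -> Y -> Prop) :
  (forall x, exists y, R x y) -> (forall x x' y, R x y -> R x' y -> x = x') ->
  card_leT X Y.
Proof.
  intros Htot Hinj. destruct (choice R Htot) as [g Hg].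
  exists g. intros u v E. apply (Hinj u v (g u)); [|rewrite E]; apply Hg.
Qed.

Lemma proj1_sig_injective {T : Type} (P : T -> Prop) (u v : {x | P x}) :
  proj1_sig u = proj1_sig v -> u = v.
Proof. apply eq_sig_hprop. intros; apply proof_irrelevance. Qed.

Lemma card_leT_proj1_sig {Y : Type} (D : Y -> Prop) : card_leT {y | D y} Y.
Proof. exists (@proj1_sig _ _). apply proj1_sig_injective. Qed.

Lemma card_leT_split {Y : Type} (D : Y -> Prop) : card_leT Y ({y | D y} + {y | ~ D y}).
Proof.
  apply (card_leT_of_rel (fun y u => y = match u with inl v | inr v => proj1_sig v end)).
  - intro y. destruct (classic (D y)) as [Hy|Hy];
      [exists (inl (exist _ y Hy)) | exists (inr (exist _ y Hy))]; auto.
  - intros y y' u -> ->; auto.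
Qed.

Lemma finite_card_leT X Y : card_leT X Y -> finite_type Y -> finite_type X.
Proof.
  intros [g Hg] [l Hl].
  assert (Hback : forall y, exists o : option X, forall x, g x = y -> o = Some x).
  { intro y. destruct (classic (exists x, g x = y)) as [[x Hx]|Hn].
    - exists (Some x). intros x' Hx'. f_equal. apply Hg. congruence.
    - exists None. intros x Hx. exfalso. eauto. }
  destruct (choice _ Hback) as [h Hh].
  exists (flat_map (fun y => match h y with Some x => x :: nil | None => nil end) l).
  intro x. apply in_flat_map. exists (g x). split; auto. rewrite (Hh (g x) x eq_refl). simpl; auto.
Qed.

Lemma finite_sum X Y : finite_type X -> finite_type Y -> finite_type (X + Y).
Proof.
  intros [l1 H1] [l2 H2]. exists (map inl l1 ++ map inr l2).
  intros [x|y]; apply in_app_iff; [left|right]; apply in_map; auto.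
Qed.

Lemma finite_bool : finite_type bool.
Proof. exists (true :: false :: nil). intros []; simpl; auto. Qed.

Fixpoint fresh_list {Z : Type} (fresh : list Z -> Z) (n : nat) : list Z :=
  match n with O => nil | S n => fresh (fresh_list fresh n) :: fresh_list fresh n end.

Lemma fresh_list_incr {Z} (fresh : list Z -> Z) m n :
  (m < n)%nat -> In (fresh (fresh_list fresh m)) (fresh_list fresh n).
Proof.
  induction n as [|n IHn]; intros Hmn; [lia|]. simpl.
  destruct (Nat.eq_dec m n) as [->|Hne]; [left; auto | right; apply IHn; lia].
Qed.

Lemma infinite_card_leT_nat Z : ~ finite_type Z -> card_leT nat Z.
Proof.
  intros HZ.
  assert (Hfresh : forall l : list Z, exists z, ~ In z l).
  { intro l. apply NNPP. intro Hn. apply HZ. exists l. intro z.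
    apply NNPP. intro Hz. apply Hn. eauto. }
  destruct (choice _ Hfresh) as [fresh Hf].
  exists (fun n => fresh (fresh_list fresh n)).
  intros m n E. destruct (Nat.lt_total m n) as [H|[H|H]]; auto; exfalso.
  - apply (Hf (fresh_list fresh n)). rewrite <- E. apply fresh_list_incr; auto.
  - apply (Hf (fresh_list fresh m)). rewrite E. apply fresh_list_incr; auto.
Qed.

Definition included {T : Type} (S S' : T -> Prop) : Prop := forall x, S x -> S' x.

Definition chain_union {T : Type} (F : (T -> Prop) -> Prop) : T -> Prop :=
  fun x => exists2 S, F S & S x.

Lemma zorn_included {T : Type} (P : (T -> Prop) -> Prop) :
  (forall F, (forall S, F S -> P S) ->
     (forall S S', F S -> F S' -> included S S' \/ included S' S) ->
     P (chain_union F)) ->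
  exists M, P M /\ forall S, P S -> included M S -> included S M.
Proof.
  intros Hchain. destruct (@classical_sets.Zorn_bigcup T P Hchain) as [M [PM Mmax]].
  exists M. split; auto. intros S PS HMS.
  apply NNPP. intro HSM. exact (Mmax S (conj HMS HSM) PS).
Qed.

Definition partial_bijection {X Y : Type} (R : X * Y -> Prop) : Prop :=
  (forall x y y', R (x, y) -> R (x, y') -> y = y') /\
  (forall x x' y, R (x, y) -> R (x', y) -> x = x').

Lemma partial_bijection_chain_union {X Y : Type} (F : (X * Y -> Prop) -> Prop) :
  (forall S, F S -> partial_bijection S) ->
  (forall S S', F S -> F S' -> included S S' \/ included S' S) ->
  partial_bijection (chain_union F).
Proof.
  intros HF Hc. split.
  - intros x y y' [S FS Sy] [S' FS' Sy'].
    destruct (Hc S S' FS FS') as [H|H]; [apply (proj1 (HF S' FS') x) | apply (proj1 (HF S FS) x)];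
      auto.
  - intros x x' y [S FS Sy] [S' FS' Sy'].
    destruct (Hc S S' FS FS') as [H|H];
      [apply (proj2 (HF S' FS') x x' y) | apply (proj2 (HF S FS) x x' y)]; auto.
Qed.

Lemma card_leT_total X Y : card_leT X Y \/ card_leT Y X.
Proof.
  destruct (zorn_included (@partial_bijection X Y) (@partial_bijection_chain_union X Y))
    as [M [[Mfun Minj] Mmax]].
  destruct (classic (forall x, exists y, M (x, y))) as [HX|HX].
  { left. apply (card_leT_of_rel (fun x y => M (x, y)) HX Minj). }
  destruct (classic (forall y, exists x, M (x, y))) as [HY|HY].
  { right. apply (card_leT_of_rel (fun y x => M (x, y)) HY). intros y y' x; apply Mfun. }
  exfalso.
  apply not_all_ex_not in HX as [x0 Hx0]. apply not_all_ex_not in HY as [y0 Hy0].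
  assert (Hext : partial_bijection (fun p => M p \/ p = (x0, y0))).
  { split; intros ? ? ? [H|H] [H'|H'];
      try (injection H; intros; subst); try (injection H'; intros; subst).
    all: eauto; exfalso; solve [apply Hx0; eauto | apply Hy0; eauto]. }
  assert (Hnew := Mmax _ Hext (fun p Hp => or_introl Hp) (x0, y0) (or_intror eq_refl)).
  eauto.
Qed.

Lemma finite_card_leT_infinite X Y : finite_type X -> ~ finite_type Y -> card_leT X Y.
Proof.
  intros HX HY. destruct (card_leT_total X Y) as [H|H]; auto.
  exfalso. apply HY. eapply finite_card_leT; eauto.
Qed.

Section Doubling.
Variable Y : Type.

(* [R] is the graph of an injection of [D × bool] into [D], where [D] is its domain; a maximal
   one shows [κ + κ = κ] for infinite [κ]. *)
Definition doubling_dom (R : (Y * bool) * Y -> Prop) (d : Y) : Prop := exists b y, R ((d, b), y).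

Definition doubling (R : (Y * bool) * Y -> Prop) : Prop :=
  partial_bijection R /\
  (forall d b, doubling_dom R d -> exists y, R ((d, b), y)) /\
  (forall p y, R (p, y) -> doubling_dom R y).

Lemma doubling_chain_union (F : ((Y * bool) * Y -> Prop) -> Prop) :
  (forall S, F S -> doubling S) ->
  (forall S S', F S -> F S' -> included S S' \/ included S' S) ->
  doubling (chain_union F).
Proof.
  intros HF Hc. split; [|split].
  - apply partial_bijection_chain_union; auto. intros S FS; apply HF, FS.
  - intros d b [b0 [y0 [S FS HS]]].
    destruct (proj1 (proj2 (HF S FS)) d b (ex_intro _ b0 (ex_intro _ y0 HS))) as [y Hy].
    exists y, S; auto.
  - intros p y [S FS HS]. destruct (proj2 (proj2 (HF S FS)) p y HS) as [b [y' Hy']].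
    exists b, y'. exists S; auto.
Qed.

Lemma doubling_card_leT R :
  doubling R -> card_leT ({d | doubling_dom R d} + {d | doubling_dom R d}) {d | doubling_dom R d}.
Proof.
  intros [[Rfun Rinj] [Rtot Rdom]].
  pose (tag (u : {d | doubling_dom R d} + {d | doubling_dom R d}) :=
          match u with inl d => (proj1_sig d, false) | inr d => (proj1_sig d, true) end).
  apply (card_leT_of_rel (fun u (y : {d | doubling_dom R d}) => R (tag u, proj1_sig y))).
  - intro u. assert (Hu : exists y, R (tag u, y)) by (destruct u as [[d Hd]|[d Hd]]; apply Rtot, Hd).
    destruct Hu as [y Hy]. exists (exist _ y (Rdom _ _ Hy)). exact Hy.
  - intros u u' y Hu Hu'. pose proof (Rinj _ _ _ Hu Hu') as E.
    destruct u as [[d pd]|[d pd]], u' as [[d' pd']|[d' pd']]; simpl in E; inversion E;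
      subst; f_equal; apply proj1_sig_injective; auto.
Qed.

Lemma double_add_b2n_inj n n' b b' :
  (2 * n + Nat.b2n b = 2 * n' + Nat.b2n b')%nat -> n = n' /\ b = b'.
Proof. destruct b, b'; simpl; intros; split; try lia; auto. Qed.

(* A maximal doubling misses only finitely many points: otherwise a sequence [e] of missed
   points can be adjoined, sending [(e n, b)] to [e (2 n + b)]. *)
Lemma doubling_maximal_cofinite M :
  doubling M -> (forall S, doubling S -> included M S -> included S M) ->
  finite_type {x | ~ doubling_dom M x}.
Proof.
  intros HM Mmax. destruct HM as [[Mfun Minj] [Mtot Mdom]].
  apply NNPP. intro Hinf. destruct (infinite_card_leT_nat _ Hinf) as [e' He'].
  pose (e n := proj1_sig (e' n)).
  assert (He : forall m n, e m = e n -> m = n).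
  { intros m n E. apply He'. unfold e in E.
    apply proj1_sig_injective, E. }
  assert (Hout : forall n, ~ doubling_dom M (e n)) by (intro n; exact (proj2_sig (e' n))).
  pose (ext q := M q \/ exists n, fst (fst q) = e n /\ snd q = e (2 * n + Nat.b2n (snd (fst q)))%nat).
  assert (Hdom : forall d, doubling_dom ext d -> doubling_dom M d \/ exists n, d = e n).
  { intros d [b [y [H|[n [Hd _]]]]]; [left; exists b, y; exact H | right; exists n; exact Hd]. }
  assert (Hext : doubling ext).
  { split; [split|split].
    - intros [d b] y y' [H|[n [Hd Hy]]] [H'|[n' [Hd' Hy']]]; simpl in *; subst.
      + eauto.
      + exfalso. apply (Hout n'). exists b, y; auto.
      + exfalso. apply (Hout n). exists b, y'; auto.
      + apply He in Hd'. subst. auto.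
    - intros [d b] [d' b'] y [H|[n [Hd Hy]]] [H'|[n' [Hd' Hy']]]; simpl in *; subst.
      + eauto.
      + exfalso. apply (Hout _ (Mdom _ _ H)).
      + exfalso. apply (Hout _ (Mdom _ _ H')).
      + apply He, double_add_b2n_inj in Hy' as [-> ->]. auto.
    - intros d b Hd. destruct (Hdom d Hd) as [HdM|[n ->]].
      + destruct (Mtot d b HdM) as [y Hy]. exists y. left; exact Hy.
      + exists (e (2 * n + Nat.b2n b)%nat). right. exists n. auto.
    - intros p y [H|[n [_ Hy]]]; [|simpl in Hy; subst y].
      + destruct (Mdom p y H) as [b [y' Hy']]. exists b, y'. left; exact Hy'.
      + exists true, (e (2 * (2 * n + Nat.b2n (snd p)) + 1)%nat).
        right. exists (2 * n + Nat.b2n (snd p))%nat. auto. }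
  apply (Hout 0%nat). exists true, (e 1%nat).
  apply (Mmax ext Hext (fun q Hq => or_introl Hq)). right. exists 0%nat. auto.
Qed.

Lemma card_leT_sum_diag : ~ finite_type Y -> card_leT (Y + Y) Y.
Proof.
  intros HY. destruct (zorn_included doubling doubling_chain_union) as [M [HM Mmax]].
  pose (D := {d | doubling_dom M d}).
  assert (HYD : card_leT Y (D + {x | ~ doubling_dom M x})) by apply card_leT_split.
  assert (HDinf : ~ finite_type D).
  { intro HD. apply HY. apply (finite_card_leT _ _ HYD), finite_sum; auto.
    apply doubling_maximal_cofinite; auto. }
  assert (HDD : card_leT (D + D) D) by exact (doubling_card_leT M HM).
  assert (HYle : card_leT Y D).
  { apply (card_leT_trans _ _ _ HYD), (card_leT_trans _ (D + D)); auto.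
    apply card_leT_sum; [apply card_leT_refl|].
    apply finite_card_leT_infinite; auto. apply doubling_maximal_cofinite; auto. }
  apply (card_leT_trans _ (D + D)); [apply card_leT_sum; auto|].
  apply (card_leT_trans _ _ _ HDD), card_leT_proj1_sig.
Qed.

End Doubling.

Lemma card_ltT_le_trans Z Y A : card_leT Z Y -> card_ltT Y A -> card_ltT Z A.
Proof.
  intros HZY [HYA HAY]. split; [eapply card_leT_trans; eauto|].
  intro HAZ. apply HAY. eapply card_leT_trans; eauto.
Qed.

Lemma card_ltT_finite Z A : finite_type Z -> ~ finite_type A -> card_ltT Z A.
Proof.
  intros HZ HA. split; [apply finite_card_leT_infinite; auto|].
  intro HAZ. apply HA. eapply finite_card_leT; eauto.
Qed.

Lemma card_ltT_sum Y1 Y2 A :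
  ~ finite_type A -> card_ltT Y1 A -> card_ltT Y2 A -> card_ltT (Y1 + Y2) A.
Proof.
  intros HA H1 H2.
  assert (Hmax : forall Y, card_leT Y1 Y -> card_leT Y2 Y -> card_ltT Y A -> card_ltT (Y1 + Y2) A).
  { intros Y HY1 HY2 HYA. apply (card_ltT_le_trans _ (Y + Y)); [apply card_leT_sum; auto|].
    destruct (classic (finite_type Y)) as [HY|HY].
    - apply card_ltT_finite; auto. apply finite_sum; auto.
    - apply (card_ltT_le_trans _ Y); auto. apply card_leT_sum_diag; auto. }
  destruct (card_leT_total Y1 Y2) as [H|H];
    [apply (Hmax Y2) | apply (Hmax Y1)]; auto using card_leT_refl.
Qed.

Ltac piecewise_lra :=
  unfold Rmin, Rmax, Rabs, in01 in *;
  repeat match goal with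
         | |- context [Rle_dec ?a ?b] => destruct (Rle_dec a b)
         | |- context [Rcase_abs ?a] => destruct (Rcase_abs a)
         | H : context [Rle_dec ?a ?b] |- _ => destruct (Rle_dec a b)
         | H : context [Rcase_abs ?a] |- _ => destruct (Rcase_abs a)
         end; lra.

Definition square_lipschitz (p : R -> R -> R) : Prop :=
  (forall s t, in01 s -> in01 t -> in01 (p s t)) /\
  exists L, 0 < L /\ forall s t s' t', in01 s -> in01 t -> in01 s' -> in01 t' ->
    Rabs (p s' t' - p s t) <= L * (Rabs (s' - s) + Rabs (t' - t)).

Lemma square_lipschitz_uniform p : square_lipschitz p -> forall e, 0 < e ->
  exists d, 0 < d /\ forall s t s' t', in01 s -> in01 t -> in01 s' -> in01 t' ->
    Rabs (s' - s) < d -> Rabs (t' - t) < d -> Rabs (p s' t' - p s t) < e.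
Proof.
  intros [_ [L [hL Hp]]] e he. exists (e / (2 * L)). split; [apply Rdiv_lt_0_compat; lra|].
  intros s t s' t' hs ht hs' ht' h1 h2. eapply Rle_lt_trans; [apply Hp; auto|].
  replace e with (L * (e / (2 * L) + e / (2 * L))) by (field; lra).
  apply Rmult_lt_compat_l; lra.
Qed.

Ltac square_lipschitz_with L :=
  split; [intros; piecewise_lra | exists L; split; [lra | intros; piecewise_lra]].

Definition tent (t : R) : R := 1 - Rabs (2 * t - 1).

Lemma square_lipschitz_fst : square_lipschitz (fun s _ => s).
Proof. square_lipschitz_with 1. Qed.

Lemma square_lipschitz_first_half : square_lipschitz (fun _ t => Rmin (2 * t) 1).
Proof. square_lipschitz_with 2. Qed.

Lemma square_lipschitz_second_half : square_lipschitz (fun _ t => Rmax (2 * t - 1) 0).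
Proof. square_lipschitz_with 2. Qed.

Lemma square_lipschitz_rev : square_lipschitz (fun _ t => 1 - t).
Proof. square_lipschitz_with 1. Qed.

Lemma square_lipschitz_tent : square_lipschitz (fun _ t => tent t).
Proof. unfold tent. square_lipschitz_with 2. Qed.

Lemma square_lipschitz_tent_shrink : square_lipschitz (fun s t => Rmin (tent t) (1 - s)).
Proof. unfold tent. square_lipschitz_with 2. Qed.

Lemma Rabs_lt_between x e : Rabs x < e -> - e < x < e.
Proof. unfold Rabs; destruct (Rcase_abs x); lra. Qed.

Lemma in01_0 : in01 0.
Proof. unfold in01; lra. Qed.

Lemma in01_1 : in01 1.
Proof. unfold in01; lra. Qed.

Lemma path_concat_0 {X : Type} (f g : R -> X) : path_concat f g 0 = f 0.
Proof. unfold path_concat. destruct (Rle_dec 0 (1/2)); [|lra]. f_equal; ring. Qed.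

Lemma path_concat_1 {X : Type} (f g : R -> X) : path_concat f g 1 = g 1.
Proof. unfold path_concat. destruct (Rle_dec 1 (1/2)); [lra|]. f_equal; ring. Qed.

Lemma path_concat_cases {X : Type} (f g : R -> X) t : in01 t ->
  (t <= 1/2 /\ in01 (2 * t) /\ path_concat f g t = f (2 * t)) \/
  (1/2 < t /\ in01 (2 * t - 1) /\ path_concat f g t = g (2 * t - 1)).
Proof.
  intros Ht. unfold path_concat. destruct (Rle_dec t (1/2)).
  - left. repeat split; auto; unfold in01 in *; lra.
  - right. repeat split; auto; unfold in01 in *; lra.
Qed.

Section PathCalculus.
Variables (X : Type) (op : (X -> Prop) -> Prop).

Lemma cont01x01_swap H : cont01x01 op H -> cont01x01 op (fun s t => H t s).
Proof.
  intros HH U s t HU hs ht Hu. destruct (HH U t s HU ht hs Hu) as [e [he He]].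
  exists e; split; [auto|]. intros s' t' h1 h2 h3 h4. apply He; auto.
Qed.

Lemma cont01x01_of_cont01 f : cont01 op f -> cont01x01 op (fun _ t => f t).
Proof.
  intros Hf U s t HU hs ht Hu. destruct (Hf U t HU ht Hu) as [e [he He]].
  exists e; split; auto.
Qed.

Lemma cont01_of_cont01x01 f : cont01x01 op (fun _ t => f t) -> cont01 op f.
Proof.
  intros Hf U t HU ht Hu. destruct (Hf U 0 t HU in01_0 ht Hu) as [e [he He]].
  exists e; split; auto. intros s hs hst. apply (He 0 s); auto using in01_0.
  rewrite Rminus_0_r, Rabs_R0; auto.
Qed.

Lemma cont01x01_comp H p q : cont01x01 op H -> square_lipschitz p -> square_lipschitz q ->
  cont01x01 op (fun s t => H (p s t) (q s t)).
Proof.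
  intros HH Hp Hq U s t HU hs ht Hu.
  destruct (HH U (p s t) (q s t) HU (proj1 Hp s t hs ht) (proj1 Hq s t hs ht) Hu) as [e [he He]].
  destruct (square_lipschitz_uniform p Hp e he) as [d1 [hd1 Hd1]].
  destruct (square_lipschitz_uniform q Hq e he) as [d2 [hd2 Hd2]].
  exists (Rmin d1 d2). split; [apply Rmin_pos; lra|].
  intros s' t' h1 h2 h3 h4. pose proof (Rmin_l d1 d2); pose proof (Rmin_r d1 d2).
  apply He; [apply (proj1 Hp) | apply (proj1 Hq) | apply Hd1 | apply Hd2]; auto; lra.
Qed.

Lemma cont01x01_comp_cont01 f q : cont01 op f -> square_lipschitz q ->
  cont01x01 op (fun s t => f (q s t)).
Proof.
  intros Hf Hq.
  exact (cont01x01_comp _ _ _ (cont01x01_of_cont01 f Hf) square_lipschitz_fst Hq).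
Qed.

Lemma cont01x01_glue H K1 K2 : cont01x01 op K1 -> cont01x01 op K2 ->
  (forall s t, in01 s -> in01 t -> t <= 1/2 -> H s t = K1 s t) ->
  (forall s t, in01 s -> in01 t -> 1/2 <= t -> H s t = K2 s t) ->
  cont01x01 op H.
Proof.
  intros C1 C2 E1 E2 U s t HU hs ht Hu.
  destruct (Rlt_le_dec t (1/2)) as [Hlt|Hge]; [|destruct (Rlt_le_dec (1/2) t) as [Hgt|Hle]].
  - rewrite E1 in Hu by (auto; lra). destruct (C1 U s t HU hs ht Hu) as [e [he He]].
    exists (Rmin e (1/2 - t)). split; [apply Rmin_pos; lra|].
    intros s' t' h1 h2 h3 h4.
    pose proof (Rmin_l e (1/2 - t)); pose proof (Rmin_r e (1/2 - t)).
    assert (t' <= 1/2) by (apply Rabs_lt_between in h4; lra).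
    rewrite E1 by auto. apply He; auto; lra.
  - rewrite E2 in Hu by (auto; lra). destruct (C2 U s t HU hs ht Hu) as [e [he He]].
    exists (Rmin e (t - 1/2)). split; [apply Rmin_pos; lra|].
    intros s' t' h1 h2 h3 h4.
    pose proof (Rmin_l e (t - 1/2)); pose proof (Rmin_r e (t - 1/2)).
    assert (1/2 <= t') by (apply Rabs_lt_between in h4; lra).
    rewrite E2 by auto. apply He; auto; lra.
  - assert (Hu1 : U (K1 s t)) by (rewrite <- E1; auto; lra).
    assert (Hu2 : U (K2 s t)) by (rewrite <- E2; auto; lra).
    destruct (C1 U s t HU hs ht Hu1) as [e1 [he1 He1]].
    destruct (C2 U s t HU hs ht Hu2) as [e2 [he2 He2]].
    exists (Rmin e1 e2). split; [apply Rmin_pos; lra|].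
    intros s' t' h1 h2 h3 h4.
    pose proof (Rmin_l e1 e2); pose proof (Rmin_r e1 e2).
    destruct (Rle_dec t' (1/2)).
    + rewrite E1 by auto. apply He1; auto; lra.
    + rewrite E2 by (auto; lra). apply He2; auto; lra.
Qed.

Lemma cont01x01_concat H1 H2 : cont01x01 op H1 -> cont01x01 op H2 ->
  (forall s, in01 s -> H1 s 1 = H2 s 0) ->
  cont01x01 op (fun s t => path_concat (H1 s) (H2 s) t).
Proof.
  intros C1 C2 E.
  apply (cont01x01_glue _ (fun s t => H1 s (Rmin (2 * t) 1)) (fun s t => H2 s (Rmax (2 * t - 1) 0))).
  - exact (cont01x01_comp _ _ _ C1 square_lipschitz_fst square_lipschitz_first_half).
  - exact (cont01x01_comp _ _ _ C2 square_lipschitz_fst square_lipschitz_second_half).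
  - intros s t hs ht hle. unfold path_concat. destruct (Rle_dec t (1/2)); [|lra].
    f_equal. piecewise_lra.
  - intros s t hs ht hge. unfold path_concat. destruct (Rle_dec t (1/2)).
    + replace t with (1/2) by lra. replace (Rmax (2 * (1/2) - 1) 0) with 0 by piecewise_lra.
      replace (2 * (1/2)) with 1 by field. auto.
    + f_equal. piecewise_lra.
Qed.

Lemma cont01_concat f g : f 1 = g 0 -> cont01 op f -> cont01 op g ->
  cont01 op (path_concat f g).
Proof.
  intros E Cf Cg. apply cont01_of_cont01x01.
  exact (cont01x01_concat _ _ (cont01x01_of_cont01 _ Cf) (cont01x01_of_cont01 _ Cg) (fun _ _ => E)).
Qed.

Lemma cont01_rev f : cont01 op f -> cont01 op (path_rev f).
Proof.
  intros Cf. apply cont01_of_cont01x01. exact (cont01x01_comp_cont01 _ _ Cf square_lipschitz_rev).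
Qed.

Lemma path_homotopic_refl f : cont01 op f -> path_homotopic op f f.
Proof.
  intros Cf. exists (fun _ t => f t). repeat split; auto. apply cont01x01_of_cont01; auto.
Qed.

Lemma path_homotopic_trans f g h :
  path_homotopic op f g -> path_homotopic op g h -> path_homotopic op f h.
Proof.
  intros [H1 [C1 [A1 [B1 [D1 E1]]]]] [H2 [C2 [A2 [B2 [D2 E2]]]]].
  exists (fun s t => path_concat (fun u => H1 u t) (fun u => H2 u t) s).
  split; [|split; [|split; [|split]]].
  - apply cont01x01_swap with (H := fun t s => path_concat (fun u => H1 u t) (fun u => H2 u t) s).
    apply (cont01x01_concat (fun t u => H1 u t) (fun t u => H2 u t)); try apply cont01x01_swap; auto.
    intros t ht. rewrite B1, A2; auto.
  - intros t ht. rewrite path_concat_0. auto.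
  - intros t ht. rewrite path_concat_1. auto.
  - intros s hs. destruct (path_concat_cases (fun u => H1 u 0) (fun u => H2 u 0) s hs)
      as [[_ [hs' ->]]|[_ [hs' ->]]]; auto.
    rewrite D2, <- (B1 0 in01_0), D1; auto using in01_1.
  - intros s hs. destruct (path_concat_cases (fun u => H1 u 1) (fun u => H2 u 1) s hs)
      as [[_ [hs' ->]]|[_ [hs' ->]]]; auto.
    rewrite E2, <- (B1 1 in01_1), E1; auto using in01_1.
Qed.

Lemma path_homotopic_rev f g : path_homotopic op f g -> path_homotopic op (path_rev f) (path_rev g).
Proof.
  intros [H [C [A0 [B0 [D0 E0]]]]].
  exists (fun s t => H s (1 - t)). unfold path_rev.
  split; [|split; [|split; [|split]]].
  - exact (cont01x01_comp _ _ _ C square_lipschitz_fst square_lipschitz_rev).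
  - intros t ht. apply A0. unfold in01 in *; lra.
  - intros t ht. apply B0. unfold in01 in *; lra.
  - intros s hs. rewrite Rminus_0_r. auto.
  - intros s hs. replace (1 - 1) with 0 by ring. auto.
Qed.

Lemma path_homotopic_concat f1 g1 f2 g2 : f1 1 = f2 0 ->
  path_homotopic op f1 g1 -> path_homotopic op f2 g2 ->
  path_homotopic op (path_concat f1 f2) (path_concat g1 g2).
Proof.
  intros Ef [H1 [C1 [A1 [B1 [D1 E1]]]]] [H2 [C2 [A2 [B2 [D2 E2]]]]].
  exists (fun s t => path_concat (H1 s) (H2 s) t).
  split; [|split; [|split; [|split]]].
  - apply cont01x01_concat; auto. intros s hs. rewrite E1, D2; auto.
  - intros t ht. unfold path_concat.
    destruct (Rle_dec t (1/2)); [apply A1 | apply A2]; unfold in01 in *; lra.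
  - intros t ht. unfold path_concat.
    destruct (Rle_dec t (1/2)); [apply B1 | apply B2]; unfold in01 in *; lra.
  - intros s hs. rewrite !path_concat_0. auto.
  - intros s hs. rewrite !path_concat_1. auto.
Qed.

Lemma path_homotopic_tent_const h : cont01 op h ->
  path_homotopic op (fun t => h (tent t)) (fun _ => h 0).
Proof.
  intros Ch. exists (fun s t => h (Rmin (tent t) (1 - s))).
  split; [|split; [|split; [|split]]].
  - exact (cont01x01_comp_cont01 _ _ Ch square_lipschitz_tent_shrink).
  - intros t ht. f_equal. unfold tent. piecewise_lra.
  - intros t ht. f_equal. unfold tent. piecewise_lra.
  - intros s hs. f_equal. unfold tent. piecewise_lra.
  - intros s hs. f_equal. unfold tent. piecewise_lra.
Qed.

End PathCalculus.

Lemma card_leT_fiber_concat {X : Type} (f g : R -> X) x :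
  card_leT {t | fiber01 (path_concat f g) x t} ({t | fiber01 f x t} + {t | fiber01 g x t}).
Proof.
  apply (card_leT_of_rel (fun u v => match v with
                                     | inl w => proj1_sig w = 2 * proj1_sig u
                                     | inr w => proj1_sig w = 2 * proj1_sig u - 1 end)).
  - intros [t [ht Ht]]. simpl.
    destruct (path_concat_cases f g t ht) as [[_ [ht' E]]|[_ [ht' E]]]; rewrite E in Ht.
    + exists (inl (exist _ (2 * t) (conj ht' Ht))). reflexivity.
    + exists (inr (exist _ (2 * t - 1) (conj ht' Ht))). reflexivity.
  - intros u u' [w|w] Hu Hu'; apply proj1_sig_injective; lra.
Qed.

Lemma card_leT_fiber_rev {X : Type} (f : R -> X) x :
  card_leT {t | fiber01 (path_rev f) x t} {t | fiber01 f x t}.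
Proof.
  apply (card_leT_of_rel (fun u v => proj1_sig v = 1 - proj1_sig u)).
  - intros [t [ht Ht]]. simpl.
    assert (ht' : in01 (1 - t)) by (unfold in01 in *; lra).
    exists (exist _ (1 - t) (conj ht' Ht)). reflexivity.
  - intros u u' w Hu Hu'. apply proj1_sig_injective. lra.
Qed.

Lemma card_leT_fiber_tent {X : Type} (h : R -> X) x :
  (forall s t, in01 s -> in01 t -> h s = h t -> s = t) ->
  card_leT {t | fiber01 (fun t => h (tent t)) x t} bool.
Proof.
  intros Hh. apply (card_leT_of_rel (fun u b => b = true <-> proj1_sig u <= 1/2)).
  - intros [t Ht]. simpl. destruct (Rle_dec t (1/2)).
    + exists true. tauto.
    + exists false. split; [discriminate | contradiction].
  - intros [t [ht Ht]] [t' [ht' Ht']] b Hb Hb'. apply proj1_sig_injective. simpl in *.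
    assert (E : tent t = tent t').
    { apply Hh; [unfold tent; piecewise_lra | unfold tent; piecewise_lra | congruence]. }
    unfold tent in E. destruct b.
    + assert (t <= 1/2) by (apply Hb; auto). assert (t' <= 1/2) by (apply Hb'; auto).
      piecewise_lra.
    + assert (~ t <= 1/2) by (intro Hle; discriminate (proj2 Hb Hle)).
      assert (~ t' <= 1/2) by (intro Hle; discriminate (proj2 Hb' Hle)). piecewise_lra.
Qed.

Lemma card_bound_of_card_ltT {T : Type} (S : T -> Prop) A :
  ~ finite_type A -> card_ltT {t | S t} A -> card_bound S A.
Proof. intros HA H. split; [contradiction | auto]. Qed.

Lemma card_ltT_of_card_bound {T : Type} (S : T -> Prop) A :
  ~ finite_type A -> card_bound S A -> card_ltT {t | S t} A.
Proof. intros HA [_ H]. exact (H HA). Qed.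

Section AlphaILoops.
Variables (X : Type) (op : (X -> Prop) -> Prop) (I : (X -> Prop) -> Prop) (A : Type) (a : X).
Hypotheses (HI : is_ideal I) (HA : ~ finite_type A).

Lemma alpha_I_loop_concat f g :
  alpha_I_loop op I A f a -> alpha_I_loop op I A g a -> alpha_I_loop op I A (path_concat f g) a.
Proof.
  intros [[Cf [Bf [IBf Hf]]] [Ef0 Ef1]] [[Cg [Bg [IBg Hg]]] [Eg0 Eg1]].
  split; [split|split].
  - apply cont01_concat; auto. congruence.
  - exists (fun x => Bf x \/ Bg x). split; [apply (proj1 (proj2 HI)); auto|].
    intros x Hx. apply (card_bound_of_card_ltT _ _ HA).
    apply (card_ltT_le_trans _ _ _ (card_leT_fiber_concat f g x)).
    apply card_ltT_sum; [exact HA | |].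
    + apply (card_ltT_of_card_bound _ _ HA), Hf. tauto.
    + apply (card_ltT_of_card_bound _ _ HA), Hg. tauto.
  - rewrite path_concat_0; auto.
  - rewrite path_concat_1; auto.
Qed.

Lemma alpha_I_loop_rev f : alpha_I_loop op I A f a -> alpha_I_loop op I A (path_rev f) a.
Proof.
  intros [[Cf [Bf [IBf Hf]]] [Ef0 Ef1]]. split; [split|split].
  - apply cont01_rev; auto.
  - exists Bf. split; auto. intros x Hx. apply (card_bound_of_card_ltT _ _ HA).
    apply (card_ltT_le_trans _ _ _ (card_leT_fiber_rev f x)).
    apply (card_ltT_of_card_bound _ _ HA), Hf, Hx.
  - unfold path_rev. rewrite Rminus_0_r. auto.
  - unfold path_rev. replace (1 - 1) with 0 by ring. auto.
Qed.

Lemma alpha_I_loop_tent h : cont01 op h ->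
  (forall s t, in01 s -> in01 t -> h s = h t -> s = t) -> h 0 = a ->
  alpha_I_loop op I A (fun t => h (tent t)) a.
Proof.
  intros Ch Hh Ha. destruct HI as [[B0 IB0] _].
  split; [split|split].
  - apply cont01_of_cont01x01. exact (cont01x01_comp_cont01 _ _ _ _ Ch square_lipschitz_tent).
  - exists B0. split; auto. intros x _. apply (card_bound_of_card_ltT _ _ HA).
    apply (card_ltT_le_trans _ _ _ (card_leT_fiber_tent h x Hh)).
    apply card_ltT_finite; [apply finite_bool | exact HA].
  - rewrite <- Ha. f_equal. unfold tent. piecewise_lra.
  - rewrite <- Ha. f_equal. unfold tent. piecewise_lra.
Qed.

Lemma alpha_I_loop_null_homotopic :
  arc_connected op -> (exists x y : X, x <> y) ->
  exists f, alpha_I_loop op I A f a /\ path_homotopic op f (fun _ => a).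
Proof.
  intros Harc [x [y Hxy]].
  assert (Hb : exists b, a <> b) by (destruct (classic (x = a)) as [->|Hx]; eauto).
  destruct Hb as [b Hab]. destruct (Harc a b Hab) as [h [Ch [Hh [Ha _]]]].
  exists (fun t => h (tent t)). split; [apply alpha_I_loop_tent; auto|].
  rewrite <- Ha. apply path_homotopic_tent_const; auto.
Qed.

Lemma gen_loop_homotopic_alpha_I_loop g :
  arc_connected op -> (exists x y : X, x <> y) -> gen_loop op I A a g ->
  exists f, alpha_I_loop op I A f a /\ path_homotopic op f g.
Proof.
  intros Harc Htwo Hg.
  induction Hg as [f Hf | | f g _ [f1 [Hf1 H1]] _ [g1 [Hg1 H2]] | f _ [f1 [Hf1 H1]]
                  | f g _ [f1 [Hf1 H1]] _ Hfg].
  - exists f. split; auto. apply path_homotopic_refl. apply Hf.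
  - apply alpha_I_loop_null_homotopic; auto.
  - exists (path_concat f1 g1). split; [apply alpha_I_loop_concat; auto|].
    apply path_homotopic_concat; auto. destruct Hf1 as [_ [_ ->]], Hg1 as [_ [-> _]]. auto.
  - exists (path_rev f1). split; [apply alpha_I_loop_rev; auto | apply path_homotopic_rev; auto].
  - exists f1. split; auto. eapply path_homotopic_trans; eauto.
Qed.

End AlphaILoops.

Theorem theorem3p3 (X : Type) (op : (X -> Prop) -> Prop)
  (Htop : is_topology op) (Hhaus : hausdorff op) (Hlc : locally_compact op)
  (Harc : arc_connected op) (Htwo : exists x y : X, x <> y)
  (a : X) (I : (X -> Prop) -> Prop) (HI : is_ideal I)
  (A : Type) (HA : ~ finite_type A) :
  forall g : R -> X, is_loop op g a ->
    (gen_loop op I A a g <->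
     exists f : R -> X, alpha_I_loop op I A f a /\ path_homotopic op f g).
Proof.
  intros g Hg. split.
  - apply gen_loop_homotopic_alpha_I_loop; auto.
  - intros [f [Hf Hfg]]. apply gen_homot with f; auto. apply gen_base; auto.
Qed.
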